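(* Consider the three-door Monty Hall game described in the context as a zero-sum game in which Conie's payoff is her winning indicator. Let $P^*$ be Conie's mixed strategy assigning probability $1/3$ to each of $1\,\mathrm{s}\,\mathrm{s}$, $2\,\mathrm{s}\,\mathrm{s}$, $3\,\mathrm{s}\,\mathrm{s}$, and let $Q^*_{1,1,1}$ be Monte's mixed strategy assigning probability $1/3$ to each of $(1,2)$, $(2,1)$, $(3,1)$. Then the value of the game is $V=\max_P\min_Q W(P,Q)=\min_Q\max_P W(P,Q)=2/3$, where $W(P,Q)$ is Conie's winning probability, and $(P^*,Q^*_{1,1,1})$ is a minimax solution (saddle point). Moreover $P^*$ is equalizing: $W(P^*,Q)=2/3$ for every mixed strategy $Q$ of Monte.
   Context: Doors are numbered $1,2,3$. A pure strategy of Monte is a pair $(\theta,d)$ with $\theta\in\{1,2,3\}$ (the door hiding the prize) and $d\in\{1,2,3\}\setminus\{\theta\}$ (six strategies). A pure strategy of Conie is a triple $x\,a\,b$ with $x\in\{1,2,3\}$ and $a,b\in\{\mathrm{h},\mathrm{s}\}$ (twelve strategies). Under the profile $((\theta,d),x\,a\,b)$: Monte offers door $y=\theta$ if $x\neq\theta$ and $y=d$ if $x=\theta$; Conie's action is $a$ if $y$ is the smaller of the two doors in $\{1,2,3\}\setminus\{x\}$ and $b$ otherwise; her final choice is $z=x$ for action $\mathrm{h}$ and $z=y$ for action $\mathrm{s}$; she wins (payoff 1) iff $z=\theta$, else payoff 0, and Monte's payoff is the negative of Conie's. Mixed strategies are probability distributions on pure strategies, played independently; $W(P,Q)$ is the resulting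 probability that Conie wins. A profile $(P^*,Q^* )$ is a minimax solution if $W(P^*,Q^* )=\max_P W(P,Q^* )=\min_Q W(P^*,Q)$. *)

From mathcomp Require Import all_boot all_order all_algebra.
Set Implicit Arguments. Unset Strict Implicit. Unset Printing Implicit Defensive.
Import Order.TTheory GRing.Theory Num.Theory.
Local Open Scope ring_scope.

(* Doors 1,2,3 are represented by the ordinals 0,1,2 of 'I_3
   (door k+1 <-> ordinal k; the order is preserved). *)
Definition door := 'I_3.

Definition monte := {p : door * door | p.1 != p.2}.
Definition theta (m : monte) : door := (val m).1.
Definition dalt (m : monte) : door := (val m).2.

(* Conie's pure strategies x a b; actions encoded as bool:
   false = h (hold), true = s (switch). *)
Definition hold := false.
Definition switch := true.
Definition conie := (door * bool * bool)%type.
Definition cx (c : conie) : door := c.1.1.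
Definition ca (c : conie) : bool := c.1.2.
Definition cb (c : conie) : bool := c.2.

Definition offer (m : monte) (x : door) : door :=
  if x != theta m then theta m else dalt m.

Definition is_smaller_other (x y : door) : bool :=
  (y != x) && [forall w : door, (w != x) ==> (y <= w)%N].

Definition final_choice (m : monte) (c : conie) : door :=
  let y := offer m (cx c) in
  let act := if is_smaller_other (cx c) y then ca c else cb c in
  if act then y else cx c.

Definition wins (m : monte) (c : conie) : bool := final_choice m c == theta m.

Definition is_mixed (R : realFieldType) (T : finType) (p : {ffun T -> R}) : Prop :=
  (forall t, 0 <= p t) /\ \sum_(t : T) p t = 1.

Definition W (R : realFieldType) (P : {ffun conie -> R}) (Q : {ffun monte -> R}) : R :=
  \sum_(c : conie) \sum_(m : monte) P c * Q m * (wins m c)%:R.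

Definition is_min_of (R : realFieldType) (A : Type) (S : A -> Prop) (f : A -> R) (v : R) : Prop :=
  (exists2 x, S x & f x = v) /\ (forall x, S x -> v <= f x).
Definition is_max_of (R : realFieldType) (A : Type) (S : A -> Prop) (f : A -> R) (v : R) : Prop :=
  (exists2 x, S x & f x = v) /\ (forall x, S x -> f x <= v).

Definition maxmin_value (R : realFieldType) (v : R) : Prop :=
  exists mn : {ffun conie -> R} -> R,
    (forall P, is_mixed P -> is_min_of (@is_mixed R monte) (W P) (mn P)) /\
    is_max_of (@is_mixed R conie) mn v.

Definition minmax_value (R : realFieldType) (v : R) : Prop :=
  exists mx : {ffun monte -> R} -> R,
    (forall Q, is_mixed Q -> is_max_of (@is_mixed R conie) (fun P => W P Q) (mx Q)) /\
    is_min_of (@is_mixed R monte) mx v.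

Definition minimax_solution (R : realFieldType) (Ps : {ffun conie -> R}) (Qs : {ffun monte -> R}) : Prop :=
  is_mixed Ps /\ is_mixed Qs /\
  is_max_of (@is_mixed R conie) (fun P => W P Qs) (W Ps Qs) /\
  is_min_of (@is_mixed R monte) (W Ps) (W Ps Qs).

Definition Pstar (R : realFieldType) : {ffun conie -> R} :=
  [ffun c => if ca c && cb c then 3%:R^-1 else 0].

(* Q^*_{1,1,1} : 1/3 on each of (1,2), (2,1), (3,1) *)
Definition Qstar (R : realFieldType) : {ffun monte -> R} :=
  [ffun m => if ((nat_of_ord (theta m), nat_of_ord (dalt m)) \in
                  [:: (0%N, 1%N); (1%N, 0%N); (2%N, 0%N)])
             then 3%:R^-1 else 0].

From mathcomp Require Import all_boot all_order all_algebra.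
Import Order.TTheory GRing.Theory Num.Theory.
Local Open Scope ring_scope.

(* Always switching wins exactly when the first pick misses the prize, so
   Pstar wins with probability 2/3 whatever Monte does.  Conversely, against
   Qstar no pure strategy of Conie wins more than two of the three equally
   likely scenarios.  As W is bilinear, a mixed strategy of one player is
   always met by a pure best response of the other, so these two facts make
   (Pstar, Qstar) a saddle point of value 2/3. *)

Section MixedStrategies.
Variables (R : realFieldType) (T : finType).
Implicit Types (p : {ffun T -> R}) (g : T -> R).

Definition pure (t0 : T) : {ffun T -> R} := [ffun t => (t == t0)%:R].

Lemma pure_mixed t0 : is_mixed (pure t0).
Proof.
split=> [t|]; first by rewrite ffunE ler0n.
rewrite (bigD1 t0) //= big1 => [|t /negbTE t_neq]; first by rewrite ffunE eqxx addr0.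
by rewrite ffunE t_neq.
Qed.

Lemma sum_pure t0 g : \sum_t pure t0 t * g t = g t0.
Proof.
rewrite (bigD1 t0) //= ffunE eqxx mul1r big1 ?addr0 // => t /negbTE t_neq.
by rewrite ffunE t_neq mul0r.
Qed.

Lemma mixed_avg_ge p g v : is_mixed p -> (forall t, v <= g t) -> v <= \sum_t p t * g t.
Proof.
case=> p_ge0 p_sum1 v_le; rewrite -[v]mul1r -p_sum1 mulr_suml.
by apply: ler_sum => t _; rewrite ler_wpM2l.
Qed.

Lemma mixed_avg_le p g v : is_mixed p -> (forall t, g t <= v) -> \sum_t p t * g t <= v.
Proof.
case=> p_ge0 p_sum1 le_v; rewrite -[v]mul1r -p_sum1 mulr_suml.
by apply: ler_sum => t _; rewrite ler_wpM2l.
Qed.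

End MixedStrategies.

Arguments pure {R T}.

Section WinningProbability.
Variable R : realFieldType.
Implicit Types (P : {ffun conie -> R}) (Q : {ffun monte -> R}).

Lemma W_pure_monte P m : W P (pure m) = \sum_c P c * (wins m c)%:R.
Proof.
apply: eq_bigr => c _.
rewrite (eq_bigr (fun m' => pure m m' * (P c * (wins m' c)%:R))) ?sum_pure // => m' _.
by rewrite -mulrA mulrCA.
Qed.

Lemma W_pure_conie c Q : W (pure c) Q = \sum_m Q m * (wins m c)%:R.
Proof.
rewrite /W exchange_big; apply: eq_bigr => m _.
rewrite (eq_bigr (fun c' => pure c c' * (Q m * (wins m c')%:R))) ?sum_pure // => c' _.
by rewrite mulrA.
Qed.

Lemma W_avg_monte P Q : W P Q = \sum_m Q m * W P (pure m).
Proof.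
rewrite {1}/W exchange_big; apply: eq_bigr => m _; rewrite W_pure_monte mulr_sumr.
by apply: eq_bigr => c _; rewrite -mulrA mulrCA.
Qed.

Lemma W_avg_conie P Q : W P Q = \sum_c P c * W (pure c) Q.
Proof.
apply: eq_bigr => c _; rewrite W_pure_conie mulr_sumr.
by apply: eq_bigr => m _; rewrite mulrA.
Qed.

Definition monte0 : monte := exist _ (ord0, ord_max) isT.
Definition conie0 : conie := (ord0, switch, switch).

Definition worst_monte P : monte := [arg min_(m < monte0) W P (pure m)]%O.
Definition best_conie Q : conie := [arg max_(c > conie0) W (pure c) Q]%O.

Lemma min_W_worst_monte P : is_min_of (@is_mixed R monte) (W P) (W P (pure (worst_monte P))).
Proof.
split; first by exists (pure (worst_monte P)); first exact: pure_mixed.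
move=> Q Q_mixed; rewrite [W P Q]W_avg_monte.
apply: (@mixed_avg_ge _ _ Q (fun m => W P (pure m)) _ Q_mixed) => m.
rewrite /worst_monte; have [m0 _ m0_min] := arg_minP (fun m => W P (pure m)) (isT : xpredT monte0).
exact: m0_min m isT.
Qed.

Lemma max_W_best_conie Q :
  is_max_of (@is_mixed R conie) (fun P => W P Q) (W (pure (best_conie Q)) Q).
Proof.
split; first by exists (pure (best_conie Q)); first exact: pure_mixed.
move=> P P_mixed; rewrite [W P Q]W_avg_conie.
apply: (@mixed_avg_le _ _ P (fun c => W (pure c) Q) _ P_mixed) => c.
rewrite /best_conie; have [c0 _ c0_max] := arg_maxP (fun c => W (pure c) Q) (isT : xpredT conie0).
exact: c0_max c isT.
Qed.

Section Saddle.
Variables (Ps : {ffun conie -> R}) (Qs : {ffun monte -> R}) (v : R).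
Hypotheses (Ps_mixed : is_mixed Ps) (Qs_mixed : is_mixed Qs).
Hypothesis Ps_equalizes : forall m, W Ps (pure m) = v.
Hypothesis Qs_caps : forall c, W (pure c) Qs <= v.

Lemma W_equalizer Q : is_mixed Q -> W Ps Q = v.
Proof.
move=> Q_mixed; rewrite W_avg_monte; apply/eqP; rewrite eq_le.
by rewrite mixed_avg_le ?mixed_avg_ge // => m; rewrite Ps_equalizes.
Qed.

Lemma W_le_cap P : is_mixed P -> W P Qs <= v.
Proof. by move=> P_mixed; rewrite W_avg_conie mixed_avg_le. Qed.

Lemma saddle_maxmin_value : maxmin_value v.
Proof.
exists (fun P => W P (pure (worst_monte P))); split=> [P _|].
  exact: min_W_worst_monte.
split; first by exists Ps; rewrite ?Ps_equalizes.
move=> P P_mixed /=; have [_ worst_le] := min_W_worst_monte P.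
exact: le_trans (worst_le _ Qs_mixed) (W_le_cap _ P_mixed).
Qed.

Lemma saddle_minmax_value : minmax_value v.
Proof.
exists (fun Q => W (pure (best_conie Q)) Q); split=> [Q _|].
  exact: max_W_best_conie.
split.
  exists Qs => //; apply/eqP; rewrite eq_le Qs_caps -{1}(W_equalizer _ Qs_mixed).
  by case: (max_W_best_conie Qs) => _; apply.
move=> Q Q_mixed; rewrite -(W_equalizer _ Q_mixed).
by case: (max_W_best_conie Q) => _; apply.
Qed.

Lemma saddle_minimax_solution : minimax_solution Ps Qs.
Proof.
have W_PsQs := W_equalizer _ Qs_mixed.
do 2!split=> //; rewrite W_PsQs; split.
  by split; [exists Ps | move=> P; apply: W_le_cap].
by split; [exists Qs | move=> Q /W_equalizer ->].
Qed.

Lemma equalizer_cap_saddle :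
  [/\ maxmin_value v, minmax_value v, minimax_solution Ps Qs, W Ps Qs = v
    & forall Q, is_mixed Q -> W Ps Q = v].
Proof.
split; [exact: saddle_maxmin_value | exact: saddle_minmax_value |
        exact: saddle_minimax_solution | exact: W_equalizer | exact: W_equalizer].
Qed.

End Saddle.
End WinningProbability.

Lemma theta_neq_dalt m : theta m != dalt m.
Proof. exact: valP m. Qed.

Lemma wins_switch m x : wins m (x, switch, switch) = (x != theta m).
Proof.
rewrite /wins /final_choice if_same /= /offer /cx /=.
have /negbTE dalt_theta := theta_neq_dalt m; rewrite eq_sym in dalt_theta.
by case: (x =P theta m) => [_|]; rewrite /= ?eqxx ?dalt_theta.
Qed.

Definition door1 : door := @Ordinal 3 0 isT.
Definition door2 : door := @Ordinal 3 1 isT.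
Definition door3 : door := @Ordinal 3 2 isT.

Definition door_seq : seq door := [:: door1; door2; door3].

Lemma mem_door_seq x : x \in door_seq.
Proof. by case: x => [[|[|[|x]]] ?]. Qed.

(* The locked cardinal behind [forall] blocks evaluation; the list form computes. *)
Lemma is_smaller_otherE x y :
  is_smaller_other x y = (y != x) && all (fun w => (w != x) ==> (y <= w)%N) door_seq.
Proof.
congr (_ && _); apply/forallP/allP => [le_y w _ | le_y w]; first exact: le_y.
exact: le_y (mem_door_seq w).
Qed.

Definition monte_of (t d : door) (t_neq_d : t != d) : monte := exist _ (t, d) t_neq_d.

Definition monte_seq : seq monte :=
  [:: monte_of door1 door2 isT; monte_of door1 door3 isT;
      monte_of door2 door1 isT; monte_of door2 door3 isT;
      monte_of door3 door1 isT; monte_of door3 door2 isT].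

Lemma mem_monte_seq m : m \in monte_seq.
Proof. by case: m => -[[[|[|[|t]]] ?] [[|[|[|d]]] ?]] //= t_neq_d; rewrite !inE. Qed.

Definition Qstar_support (m : monte) : bool :=
  (nat_of_ord (theta m), nat_of_ord (dalt m)) \in [:: (0%N, 1%N); (1%N, 0%N); (2%N, 0%N)].

Lemma Qstar_support_size : (\sum_(m <- monte_seq) Qstar_support m)%N = 3.
Proof. by rewrite unlock. Qed.

Lemma Qstar_support_wins_le2 c : (\sum_(m <- monte_seq) (Qstar_support m && wins m c) <= 2)%N.
Proof.
under eq_bigr => m _ do rewrite /wins /final_choice is_smaller_otherE.
by rewrite unlock; case: c => [[[[|[|[|x]]] ?] []] []] //; vm_compute.
Qed.

Section MontyHall.
Variable R : realFieldType.

Lemma big_monte (F : monte -> R) : \sum_m F m = \sum_(m <- monte_seq) F m.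
Proof.
apply/perm_big/uniq_perm; [exact: index_enum_uniq | by [] |].
by move=> m; rewrite mem_index_enum mem_monte_seq.
Qed.

Lemma sum_conie (F : conie -> R) :
  \sum_c F c = \sum_(x : door) \sum_(a : bool) \sum_(b : bool) F (x, a, b).
Proof. by rewrite [RHS]pair_bigA [RHS]pair_bigA; apply: eq_bigr => -[[x a] b]. Qed.

Lemma sum_door_neq (t : door) : \sum_(x : door) (x != t)%:R = 2%:R :> R.
Proof.
rewrite (bigD1 t) //= eqxx add0r (eq_bigr (fun _ => 1)) => [|x /negbTE -> //].
by rewrite sumr_const cardC1 card_ord.
Qed.

Lemma QstarE m : Qstar R m = 3%:R^-1 * (Qstar_support m)%:R.
Proof. by rewrite ffunE -/(Qstar_support m); case: Qstar_support; rewrite ?mulr1 ?mulr0. Qed.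

Lemma Pstar_mixed : is_mixed (Pstar R).
Proof.
split=> [c|]; first by rewrite ffunE; case: ifP; rewrite ?invr_ge0 ?ler0n.
rewrite sum_conie (eq_bigr (fun _ => 3%:R^-1)) => [|x _].
  by rewrite sumr_const card_ord -[_ *+ 3]mulr_natr mulVf ?pnatr_eq0.
by rewrite !big_bool !ffunE /= !addr0.
Qed.

Lemma Qstar_mixed : is_mixed (Qstar R).
Proof.
split=> [m|]; first by rewrite QstarE mulr_ge0 ?invr_ge0 ?ler0n.
rewrite big_monte (eq_bigr _ (fun m _ => QstarE m)) -mulr_sumr -natr_sum.
by rewrite Qstar_support_size mulVf ?pnatr_eq0.
Qed.

Lemma W_Pstar_pure m : W (Pstar R) (pure m) = 2%:R / 3%:R.
Proof.
rewrite W_pure_monte sum_conie (eq_bigr (fun x => 3%:R^-1 * (x != theta m)%:R)) => [|x _].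
  by rewrite -mulr_sumr sum_door_neq mulrC.
by rewrite !big_bool !ffunE /= wins_switch !mul0r !addr0.
Qed.

Lemma W_pure_Qstar_le c : W (pure c) (Qstar R) <= 2%:R / 3%:R.
Proof.
rewrite W_pure_conie big_monte.
rewrite (eq_bigr (fun m => 3%:R^-1 * (Qstar_support m && wins m c)%:R)) => [|m _]; last first.
  by rewrite QstarE -mulrA -natrM mulnb.
rewrite -mulr_sumr -natr_sum mulrC ler_wpM2r ?invr_ge0 ?ler0n // ler_nat.
exact: Qstar_support_wins_le2.
Qed.

End MontyHall.

Theorem mainTheorem6 (R : realFieldType) :
  [/\ maxmin_value (2%:R / 3%:R : R),
      minmax_value (2%:R / 3%:R : R),
      minimax_solution (Pstar R) (Qstar R),
      W (Pstar R) (Qstar R) = 2%:R / 3%:R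
    & forall Q : {ffun monte -> R}, is_mixed Q -> W (Pstar R) Q = 2%:R / 3%:R].
Proof.
apply: equalizer_cap_saddle.
- exact: Pstar_mixed.
- exact: Qstar_mixed.
- exact: W_Pstar_pure.
- exact: W_pure_Qstar_le.
Qed.
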